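(* Let $\operatorname{pend}(n)$ denote the number of partitions of $n$ in which no even part appears exactly once (i.e., each even part size that occurs has multiplicity at least $2$; odd parts are unrestricted), and let $\operatorname{pond}(n)$ denote the number of partitions of $n$ in which no odd part appears exactly once (i.e., each odd part size that occurs has multiplicity at least $2$; even parts are unrestricted). Then, as formal power series in $q$, $$\sum_{n\ge 0}(-1)^n \operatorname{pend}(n)q^n=\frac{f_1f_{12}}{f_2^2f_6},\qquad \sum_{n\ge 0}(-1)^n \operatorname{pond}(n)q^n=\frac{f_3f_4}{f_2^2f_6}.$$
   Context: For a positive integer $r$, $f_r:=(q^r;q^r)_\infty=\prod_{k\ge1}(1-q^{rk})$. By convention $\operatorname{pend}(0)=\operatorname{pond}(0)=1$. *)

From mathcomp Require Import all_boot all_order all_algebra.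
Set Implicit Arguments. Unset Strict Implicit. Unset Printing Implicit Defensive.
Import Order.TTheory GRing.Theory Num.Theory.
Local Open Scope ring_scope.

Definition series := nat -> int.

Definition smul (a b : series) : series :=
  fun n => \sum_(i < n.+1) a i * b (n - i)%N.

(* first n+1 coefficients of the multiplicative inverse of a series with
   constant term 1:  b_0 = 1,  b_n = - sum_{i<n} b_i a_{n-i} *)
Fixpoint sinv_seq (a : series) (n : nat) : seq int :=
  match n with
  | 0%N => [:: 1]
  | m.+1 => let s := sinv_seq a m in
            rcons s (- \sum_(i < m.+1) nth 0 s i * a (m.+1 - i)%N)
  end.

Definition sinv (a : series) : series := fun n => nth 0 (sinv_seq a n) n.

(* f_r = prod_{k>=1} (1 - q^{rk}); the coefficient of q^n (r >= 1) only depends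
   on the factors with k <= n. *)
Definition feta (r : nat) : series :=
  fun n => (\prod_(k < n) (1 - 'X^(r * k.+1)) : {poly int})`_n.

(* A partition of n is encoded by its multiplicity function: m i is the
   multiplicity of the part i+1 (parts and multiplicities are at most n). *)
Definition is_partition (n : nat) (m : {ffun 'I_n -> 'I_n.+1}) : bool :=
  (\sum_(i < n) i.+1 * m i)%N == n.

Definition pend (n : nat) : nat :=
  #|[set m : {ffun 'I_n -> 'I_n.+1} | is_partition m &
      [forall i : 'I_n, ~~ odd i.+1 ==> (val (m i) != 1%N)]]|.

Definition pond (n : nat) : nat :=
  #|[set m : {ffun 'I_n -> 'I_n.+1} | is_partition m &
      [forall i : 'I_n, odd i.+1 ==> (val (m i) != 1%N)]]|.

(* Replacing q by -q turns both left-hand sides into generating functions of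
   partitions in which no part of a given parity occurs exactly once.  For a
   restricted part i, with z = (-q)^i, its factor is 1/(1 - z) - z, and
   (1/(1 - z) - z) (1 - z) = 1 - z + z^2.  As prod_i (1 - (-q)^i) = f_2^3/(f_1 f_4),
   the two identities reduce to
     prod_{i even} (1 - q^i + q^(2i)) = f_2 f_12 / (f_4 f_6),
     prod_{i odd}  (1 + q^i + q^(2i)) = f_2 f_3 / (f_1 f_6),
   which hold factorwise by (1 + y)(1 - y + y^2) = 1 + y^3 and
   (1 - x)(1 + x + x^2) = 1 - x^3.  Power series are handled through their
   truncations: [eq_upto n p q] says that p and q agree up to degree n, and
   infinite products are replaced by finite ones with the same coefficients up
   to degree n. *)

From mathcomp Require Import all_boot all_order all_algebra.
From mathcomp Require Import ring zify.
From Stdlib Require Import Setoid Morphisms.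
Import Order.TTheory GRing.Theory Num.Theory.
Local Open Scope ring_scope.

Lemma prod_ord_double {R : pzSemiRingType} (h : nat -> R) M :
  \prod_(k < M.*2) h k = \prod_(k < M) (h k.*2 * h k.*2.+1).
Proof. by elim: M => [|M IH]; rewrite ?big_ord0 // doubleS !big_ord_recr /= IH mulrA. Qed.

Lemma exprNX (R : nzRingType) k : (- 'X : {poly R}) ^+ k = (-1) ^+ odd k * 'X^k.
Proof. by rewrite [LHS]exprNn signr_odd. Qed.

Lemma coef_NXn (R : nzRingType) w k :
  ((- 'X : {poly R}) ^+ w)`_k = if k == w then (-1) ^+ w else 0.
Proof.
rewrite [(- 'X) ^+ w]exprNn -polyC1 -polyCN -polyC_exp coefCM coefXn.
by case: eqP; rewrite ?mulr1 ?mulr0.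
Qed.

Lemma sum_expr_skip1 (R : pzRingType) (b : bool) (z : R) N : (1 < N)%N ->
  \sum_(m < N) (if b && (m == 1%N :> nat) then 0 else z ^+ m) =
  \sum_(m < N) z ^+ m - (if b then z else 0).
Proof.
move=> N1; case: b; last by rewrite subr0.
rewrite (bigD1 (Ordinal N1)) //= [in RHS](bigD1 (Ordinal N1)) //= add0r expr1 addrC addrK.
by apply: eq_bigr => m; rewrite -val_eqE /= => /negbTE ->.
Qed.

Section TruncatedEquality.

Context {R : nzRingType}.
Implicit Types p q t : {poly R}.

Definition eq_upto n p q := forall k, (k <= n)%N -> p`_k = q`_k.

Context {n : nat}.

Lemma eq_upto_refl p : eq_upto n p p. Proof. by []. Qed.

Lemma eq_upto_eq p q : p = q -> eq_upto n p q. Proof. by move->. Qed.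

#[export] Instance eq_upto_equivalence : Equivalence (eq_upto n).
Proof.
split=> [p | p q pq k kn | p q s pq qs k kn] //; first by rewrite pq.
by rewrite pq // qs.
Qed.

#[export] Instance eq_upto_add :
  Proper (eq_upto n ==> eq_upto n ==> eq_upto n) (@GRing.add {poly R}).
Proof. by move=> p p' pp' q q' qq' k kn; rewrite !coefD pp' // qq'. Qed.

#[export] Instance eq_upto_opp : Proper (eq_upto n ==> eq_upto n) (@GRing.opp {poly R}).
Proof. by move=> p p' pp' k kn; rewrite !coefN pp'. Qed.

#[export] Instance eq_upto_mul :
  Proper (eq_upto n ==> eq_upto n ==> eq_upto n) (@GRing.mul {poly R}).
Proof.
move=> p p' pp' q q' qq' k kn; rewrite !coefM; apply: eq_bigr => j _.
have jk := ltn_ord j; rewrite pp' ?qq' //; lia.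
Qed.

#[export] Instance eq_upto_exp :
  Proper (eq_upto n ==> eq ==> eq_upto n) (@GRing.exp {poly R}).
Proof. by move=> p q pq _ k ->; elim: k => // k IH; rewrite !exprS; apply: eq_upto_mul. Qed.

Lemma eq_upto_prod (I : Type) (r : seq I) (P : pred I) (F G : I -> {poly R}) :
  (forall i, P i -> eq_upto n (F i) (G i)) ->
  eq_upto n (\prod_(i <- r | P i) F i) (\prod_(i <- r | P i) G i).
Proof. by move=> FG; apply: (big_ind2 (eq_upto n)) => // p p' q q' -> ->. Qed.

Lemma eq_upto_Xn0 {e} : (n < e)%N -> eq_upto n 'X^e 0.
Proof. by move=> ne k kn; rewrite coefXn coef0; case: eqP => // ke; lia. Qed.

Lemma eq_upto_NXn0 {e} : (n < e)%N -> eq_upto n ((- 'X) ^+ e) 0.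
Proof. by move=> ne; rewrite exprNn (eq_upto_Xn0 ne) mulr0. Qed.

Lemma eq_upto_mulIr {p q} t : t`_0 = 1 -> eq_upto n (p * t) (q * t) -> eq_upto n p q.
Proof.
move=> t0 pqt; suff pq0 k : (k <= n)%N -> (p - q)`_k = 0.
  by move=> k /pq0 /eqP; rewrite coefB subr_eq0 => /eqP.
elim/ltn_ind: k => k IH kn; have /eqP := pqt k kn.
rewrite -subr_eq0 -coefB -mulrBl coefM big_ord_recr /= subnn t0 mulr1 big1 ?add0r => [/eqP //|].
by move=> [j jk] _ /=; rewrite IH ?mul0r //; lia.
Qed.

Lemma eq_upto_prod_stable (g : nat -> {poly R}) {M} : (n <= M)%N ->
  (forall k, (n <= k)%N -> eq_upto n (g k) 1) ->
  eq_upto n (\prod_(k < n) g k) (\prod_(k < M) g k).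
Proof.
move=> nM g1; rewrite -!(big_mkord xpredT) (big_cat_nat (leq0n n) nM) /=.
rewrite [X in eq_upto _ _ (_ * X)]big_nat_cond.
rewrite [X in eq_upto _ _ (_ * X)](@eq_upto_prod _ _ _ _ (fun=> 1)) ?big1_eq ?mulr1 //.
by move=> k /andP[/andP[nk _] _]; apply: g1.
Qed.

End TruncatedEquality.

#[export] Hint Resolve eq_upto_refl : core.

Definition strunc (a : series) n : {poly int} := \poly_(i < n.+1) a i.

Lemma strunc_smul a b {n} : eq_upto n (strunc (smul a b) n) (strunc a n * strunc b n).
Proof.
move=> k kn; rewrite coefM coef_poly ltnS kn; apply: eq_bigr => j _.
by have jk := ltn_ord j; rewrite !coef_poly !ifT //; lia.
Qed.

Lemma size_sinv_seq a m : size (sinv_seq a m) = m.+1.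
Proof. by elim: m => //= m IH; rewrite size_rcons IH. Qed.

Lemma nth_sinv_seq a m i : (i <= m)%N -> nth 0 (sinv_seq a m) i = sinv a i.
Proof.
elim: m => [|m IH]; first by rewrite leqn0 => /eqP->.
rewrite leq_eqVlt => /predU1P[-> // | im].
by rewrite /= nth_rcons size_sinv_seq im IH.
Qed.

Lemma sinvS a m : sinv a m.+1 = - \sum_(i < m.+1) sinv a i * a (m.+1 - i)%N.
Proof.
rewrite /sinv /= nth_rcons size_sinv_seq ltnn eqxx; congr (- _).
by apply: eq_bigr => i _; rewrite nth_sinv_seq // -ltnS ltn_ord.
Qed.

Lemma strunc_sinvM a n : a 0%N = 1 -> eq_upto n (strunc (sinv a) n * strunc a n) 1.
Proof.
move=> a0 k kn; rewrite -(strunc_smul (sinv a) a k kn) coef_poly ltnS kn coefC /smul.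
case: k {kn} => [|k]; first by rewrite big_ord1 subnn a0 mulr1.
by rewrite big_ord_recr /= subnn a0 mulr1 sinvS subrr.
Qed.

Lemma coef_smul_sinv a b P n : b 0%N = 1 ->
  eq_upto n (P * strunc b n) (strunc a n) -> P`_n = smul a (sinv b) n.
Proof.
move=> b0 Pb; have PQ : eq_upto n P (strunc (smul a (sinv b)) n).
  by rewrite strunc_smul -Pb -mulrA [_ * strunc (sinv b) n]mulrC strunc_sinvM // mulr1.
by rewrite PQ // coef_poly ltnSn.
Qed.

Definition eta_poly (r M : nat) : {poly int} := \prod_(k < M) (1 - 'X^(r * k.+1)).

Lemma eta_poly_stable r {n M} : (n <= M)%N -> (0 < r)%N ->
  eq_upto n (eta_poly r n) (eta_poly r M).
Proof.
move=> nM r0; apply: (eq_upto_prod_stable (fun k => 1 - 'X^(r * k.+1)) nM) => k nk.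
by rewrite eq_upto_Xn0 ?subr0 //; nia.
Qed.

Lemma strunc_feta r n : (0 < r)%N -> eq_upto n (strunc (feta r) n) (eta_poly r n).
Proof.
by move=> r0 k kn; rewrite coef_poly ltnS kn; exact: (eta_poly_stable r kn r0 k (leqnn k)).
Qed.

Lemma coef0_eta_poly r M : (0 < r)%N -> (eta_poly r M)`_0 = 1.
Proof.
move=> r0; rewrite -horner_coef0 horner_prod big1 // => k _.
by rewrite !hornerE expr0n muln_eq0 eqn0Ngt r0 /= subr0.
Qed.

Lemma eta_poly_double r M : eta_poly (2 * r) M = \prod_(k < M) (1 - 'X^(k.*2.+2) ^+ r).
Proof. by apply: eq_bigr => k _; rewrite -exprM; congr (1 - 'X^_); lia. Qed.

Lemma eta_poly_split r M : eta_poly r M.*2 =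
  \prod_(k < M) ((1 - 'X^(k.*2.+1) ^+ r) * (1 - 'X^(k.*2.+2) ^+ r)).
Proof.
rewrite /eta_poly (prod_ord_double (fun k => 1 - 'X^(r * k.+1))).
by apply: eq_bigr => k _; rewrite -!exprM !(mulnC r).
Qed.

Definition signed_eta M : {poly int} := \prod_(i < M) (1 - (- 'X) ^+ i.+1).

Lemma signed_eta_stable {n M} : (n <= M)%N -> eq_upto n (signed_eta n) (signed_eta M).
Proof.
move=> nM; apply: (eq_upto_prod_stable (fun k => 1 - (- 'X) ^+ k.+1) nM) => k nk.
by rewrite eq_upto_NXn0 ?subr0.
Qed.

Lemma coef0_signed_eta M : (signed_eta M)`_0 = 1.
Proof.
rewrite -horner_coef0 horner_prod big1 // => k _.
by rewrite !hornerE oppr0 expr0n subr0.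
Qed.

Lemma signed_eta_split M :
  signed_eta M.*2 = \prod_(k < M) ((1 + 'X^(k.*2.+1)) * (1 - 'X^(k.*2.+2))).
Proof.
rewrite /signed_eta (prod_ord_double (fun i => 1 - (- 'X) ^+ i.+1)); apply: eq_bigr => k _.
by rewrite !exprNX /= odd_double /= mulN1r mul1r opprK.
Qed.

Definition trinomial (b : bool) (z : {poly int}) := if b then 1 - z + z ^+ 2 else 1.

Definition trinomial_prod (c : pred nat) M : {poly int} :=
  \prod_(i < M) trinomial (c i.+1) ((- 'X) ^+ i.+1).

Lemma trinomial_prod_stable c {n M} : (n <= M)%N ->
  eq_upto n (trinomial_prod c n) (trinomial_prod c M).
Proof.
move=> nM; apply: (eq_upto_prod_stable (fun k => trinomial (c k.+1) ((- 'X) ^+ k.+1)) nM).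
move=> k nk; rewrite /trinomial; case: (c k.+1) => //.
by rewrite eq_upto_NXn0 // expr0n /= subr0 addr0.
Qed.

Lemma trinomial_prod_split c M : trinomial_prod c M.*2 =
  \prod_(k < M) (trinomial (c k.*2.+1) (- 'X^(k.*2.+1)) * trinomial (c k.*2.+2) 'X^(k.*2.+2)).
Proof.
rewrite /trinomial_prod (prod_ord_double (fun i => trinomial (c i.+1) ((- 'X) ^+ i.+1))).
by apply: eq_bigr => k _; rewrite !exprNX /= odd_double /= mulN1r mul1r.
Qed.

Lemma signed_eta_identity M :
  signed_eta M.*2 * eta_poly 1 M.*2 * eta_poly 4 M = eta_poly 2 M.*2 * eta_poly 2 M ^+ 2.
Proof.
rewrite signed_eta_split !eta_poly_split (eta_poly_double 2) (eta_poly_double 1).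
rewrite -prodrXl -!big_split /=; apply: eq_bigr => k _; ring.
Qed.

Lemma trinomial_even_identity M :
  trinomial_prod (fun j => ~~ odd j) M.*2 * eta_poly 4 M * eta_poly 6 M =
  eta_poly 2 M * eta_poly 12 M.
Proof.
rewrite trinomial_prod_split (eta_poly_double 2) (eta_poly_double 3).
rewrite (eta_poly_double 1) (eta_poly_double 6) -!big_split /=.
by apply: eq_bigr => k _; rewrite /= odd_double /=; ring.
Qed.

Lemma trinomial_odd_identity M :
  trinomial_prod odd M.*2 * eta_poly 1 M.*2 * eta_poly 6 M = eta_poly 2 M * eta_poly 3 M.*2.
Proof.
rewrite trinomial_prod_split !eta_poly_split (eta_poly_double 3) (eta_poly_double 1).
by rewrite -!big_split /=; apply: eq_bigr => k _; rewrite /= odd_double /=; ring.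
Qed.

Definition nosingle_count (c : pred nat) n : nat :=
  #|[set m : {ffun 'I_n -> 'I_n.+1} | is_partition m &
      [forall i : 'I_n, c i.+1 ==> (val (m i) != 1%N)]]|.

Definition nosingle_sum (c : pred nat) n i : {poly int} :=
  \sum_(m < n.+1) (if c i.+1 && (m == 1%N :> nat) then 0 else (- 'X) ^+ (i.+1 * m)).

Definition nosingle_gf (c : pred nat) n : {poly int} := \prod_(i < n) nosingle_sum c n i.

Lemma coef_nosingle_gf c n : (nosingle_gf c n)`_n = (-1) ^+ n * (nosingle_count c n)%:Z.
Proof.
rewrite /nosingle_gf /nosingle_sum bigA_distr_bigA /= coef_sum.
set admissible := fun m : {ffun 'I_n -> 'I_n.+1} =>
  is_partition m && [forall i : 'I_n, c i.+1 ==> (val (m i) != 1%N)].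
rewrite (eq_bigr (fun m => if admissible m then (-1) ^+ n else 0)) => [|m _].
  rewrite -big_mkcond /= sumr_const -mulr_natr natz.
  by congr (_ * _%:Z); apply: eq_card => m; rewrite !inE.
rewrite /admissible; case: (boolP [forall i, _]) => [nosingle | /forallPn[i]].
  rewrite andbT (eq_bigr (fun i : 'I_n => (- 'X) ^+ (i.+1 * m i))) => [|i _].
    by rewrite prodrXr coef_NXn /is_partition eq_sym; case: eqP => // ->.
  by move/forallP: nosingle => /(_ i); case: (c i.+1) => //= /negbTE ->.
rewrite negb_imply negbK andbF => /andP[ci mi1].
by rewrite (bigD1 i) //= ci mi1 mul0r coef0.
Qed.

Lemma nosingle_sum_factor c n i : (i < n)%N ->
  eq_upto n (nosingle_sum c n i * (1 - (- 'X) ^+ i.+1)) (trinomial (c i.+1) ((- 'X) ^+ i.+1)).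
Proof.
move=> lt_in; set z := (- 'X) ^+ i.+1.
have geometric : (\sum_(m < n.+1) z ^+ m) * (1 - z) = 1 - z ^+ n.+1.
  by rewrite mulrC -opprB mulNr -subrX1 opprB.
have z_pow0 : eq_upto n (z ^+ n.+1) 0 by rewrite -exprM eq_upto_NXn0 //; nia.
rewrite /nosingle_sum (eq_bigr (fun m : 'I_n.+1 =>
  if c i.+1 && (m == 1%N :> nat) then 0 else z ^+ m)) => [|m _]; last by rewrite exprM.
rewrite sum_expr_skip1 ?ltnS ?(leq_ltn_trans (leq0n i)) // mulrBl geometric z_pow0 /trinomial.
by case: (c i.+1); rewrite ?mul0r ?subr0 //; apply: eq_upto_eq; ring.
Qed.

Lemma nosingle_gf_signed_eta c {n M} : (n <= M)%N ->
  eq_upto n (nosingle_gf c n * signed_eta M) (trinomial_prod c M).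
Proof.
move=> nM; rewrite -(signed_eta_stable nM) -(trinomial_prod_stable c nM) -big_split /=.
by apply: eq_upto_prod => i _; apply: nosingle_sum_factor.
Qed.

Lemma nosingle_gf_even n :
  eq_upto n (nosingle_gf (fun j => ~~ odd j) n * (eta_poly 2 n * eta_poly 2 n * eta_poly 6 n))
            (eta_poly 1 n * eta_poly 12 n).
Proof.
have n2n : (n <= n.*2)%N by rewrite -addnn leq_addr.
apply: (eq_upto_mulIr (signed_eta n.*2 * eta_poly 4 n)).
  by rewrite coef0M coef0_signed_eta coef0_eta_poly.
have -> : nosingle_gf (fun j => ~~ odd j) n * (eta_poly 2 n * eta_poly 2 n * eta_poly 6 n) *
          (signed_eta n.*2 * eta_poly 4 n) =
          nosingle_gf (fun j => ~~ odd j) n * signed_eta n.*2 * eta_poly 4 n * eta_poly 6 n *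
          (eta_poly 2 n * eta_poly 2 n) by ring.
rewrite nosingle_gf_signed_eta // trinomial_even_identity (eta_poly_stable 1 n2n) //.
have -> : eta_poly 1 n.*2 * eta_poly 12 n * (signed_eta n.*2 * eta_poly 4 n) =
          signed_eta n.*2 * eta_poly 1 n.*2 * eta_poly 4 n * eta_poly 12 n by ring.
by rewrite signed_eta_identity -(eta_poly_stable 2 n2n) //; apply: eq_upto_eq; ring.
Qed.

Lemma nosingle_gf_odd n :
  eq_upto n (nosingle_gf odd n * (eta_poly 2 n * eta_poly 2 n * eta_poly 6 n))
            (eta_poly 3 n * eta_poly 4 n).
Proof.
have n2n : (n <= n.*2)%N by rewrite -addnn leq_addr.
apply: (eq_upto_mulIr (signed_eta n.*2 * eta_poly 1 n.*2)).
  by rewrite coef0M coef0_signed_eta coef0_eta_poly.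
have -> : nosingle_gf odd n * (eta_poly 2 n * eta_poly 2 n * eta_poly 6 n) *
          (signed_eta n.*2 * eta_poly 1 n.*2) =
          nosingle_gf odd n * signed_eta n.*2 * eta_poly 1 n.*2 * eta_poly 6 n *
          (eta_poly 2 n * eta_poly 2 n) by ring.
rewrite nosingle_gf_signed_eta // trinomial_odd_identity (eta_poly_stable 3 n2n) //.
have -> : eta_poly 3 n.*2 * eta_poly 4 n * (signed_eta n.*2 * eta_poly 1 n.*2) =
          signed_eta n.*2 * eta_poly 1 n.*2 * eta_poly 4 n * eta_poly 3 n.*2 by ring.
by rewrite signed_eta_identity -(eta_poly_stable 2 n2n) //; apply: eq_upto_eq; ring.
Qed.

Theorem theorem2p3 :
  (forall n : nat,
     (-1) ^+ n * (pend n)%:Z =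
     smul (smul (feta 1) (feta 12))
          (sinv (smul (smul (feta 2) (feta 2)) (feta 6))) n) /\
  (forall n : nat,
     (-1) ^+ n * (pond n)%:Z =
     smul (smul (feta 3) (feta 4))
          (sinv (smul (smul (feta 2) (feta 2)) (feta 6))) n).
Proof.
have denom0 : smul (smul (feta 2) (feta 2)) (feta 6) 0 = 1.
  by rewrite /smul !big_ord1 /feta !big_ord0 !coef1 !mulr1.
split=> n.
- rewrite -[pend n]/(nosingle_count (fun j => ~~ odd j) n) -coef_nosingle_gf.
  apply: coef_smul_sinv => //; rewrite !strunc_smul !strunc_feta //.
  exact: nosingle_gf_even.
- rewrite -[pond n]/(nosingle_count odd n) -coef_nosingle_gf.
  apply: coef_smul_sinv => //; rewrite !strunc_smul !strunc_feta //.
  exact: nosingle_gf_odd.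
Qed.
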